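(* For each $n$, let $A$ be the symmetric, hollow, binary adjacency matrix of a random simple undirected graph on $[n]$ whose vertex set is partitioned into known nonempty blocks $\mathcal{B}_1,\dots,\mathcal{B}_{K^*}$; for $1\le\ell,k\le K^*$ let $\mathcal{B}_{\ell,k}=\mathcal{B}_\ell\times\mathcal{B}_k$ if $\ell\ne k$, $\mathcal{B}_{\ell,\ell}=\binom{\mathcal{B}_\ell}{2}$, $n_{\ell,k}=|\mathcal{B}_{\ell,k}|$, and $n_{**}=\min_{\ell,k}n_{\ell,k}$. Let $\Gamma$ be a finite index set and, for each $\gamma\in\Gamma$, $\gamma_B$ a nonempty set of unordered block pairs $\{\ell,k\}$ ($\ell=k$ allowed) such that $\{\gamma_B\}_{\gamma\in\Gamma}$ partitions the $((K^* )^2+K^* )/2$ unordered pairs $\{\ell,k\}$, $1\le \ell\le k\le K^*$; let $n_\gamma=\sum_{\{\ell,k\}\in\gamma_B}n_{\ell,k}$. Assume the null model $H_0$ holds: there are $B^{(0)}_\gamma\in(0,1)$ such that all $A_{v,v'}$ with $(v,v')\in\mathcal{B}_{\ell,k}$, $\{\ell,k\}\in\gamma_B$, are independent $\operatorname{Bern}(B^{(0)}_\gamma)$; write $\mathbb{P}_0$ for its probability and $B^{(1)}_{\ell,k}=B^{(0)}_\gamma$ for $\{\ell,k\}\in\gamma_B$ for the resulting block connection probabilities. Assume there exist $n_0$ and $c_1\in(0,1/2)$ such that for all $n>n_0$ and all pairs $\{\ell,k\}$, $$B^{(1)}_{\ell,k}>\frac{\log n_{\ell,k}}{n_{\ell,k}}\quad\text{and}\quad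 B^{(1)}_{\ell,k}<\tfrac12-c_1.$$ Define $\widehat{B}^{(1)}_{\ell,k}=\frac{1}{n_{\ell,k}}\sum_{(v,v')\in\mathcal{B}_{\ell,k}}A_{v,v'}$, $\widehat{B}^{(0)}_{\gamma}=\frac{1}{n_{\gamma}}\sum_{\{\ell,k\}\in\gamma_B}\sum_{(v,v')\in\mathcal{B}_{\ell,k}}A_{v,v'}$, $$-2\widehat\lambda_T=2\sum_{\gamma\in\Gamma}\sum_{\{\ell,k\}\in\gamma_B}n_{\ell,k}\left[\widehat B^{(1)}_{\ell,k}\log\left(\frac{\widehat B^{(1)}_{\ell,k}(1-\widehat B^{(0)}_\gamma)}{\widehat B^{(0)}_\gamma(1-\widehat B^{(1)}_{\ell,k})}\right)+\log\left(\frac{1-\widehat B^{(1)}_{\ell,k}}{1-\widehat B^{(0)}_\gamma}\right)\right],$$ and $$\widehat\Delta_{T,\mathrm{BIC}}=-2\widehat\lambda_T-\Big(\sum_{\gamma\in\Gamma}(|\gamma_B|-1)\Big)\log\binom{n}{2}.$$ Let $c_2$ be a constant with $0<c_2\leq \frac{1}{16}\left(1-\frac{2|\Gamma|}{(K^* )^2+K^*}\right)$. Then for all $n$ sufficiently large, $$\mathbb{P}_{0}\left[\widehat{\Delta}_{T,\mathrm{BIC}}<0\right]\geq 1-O\left(\exp\left\{-((K^* )^2+K^* )-\frac{c_2\log n_{**}}{2+2\sqrt{c_2}/3}\right\}\right).$$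
   Context: $\widehat\Delta_{T,\mathrm{BIC}}$ is the difference of BIC-penalized (negative twice log) maximized likelihoods between the tied repeated-motif hierarchical SBM (parameters indexed by $\Gamma$) and the full $K^*$-block SBM with the same known block partition; a negative value favors the tied model. The asymptotics are as $n\to\infty$, with the block structure and parameters allowed to depend on $n$. The summands of $-2\widehat\lambda_T$ are $2n_{\ell,k}$ times the Kullback–Leibler divergence between $\operatorname{Bern}(\widehat B^{(1)}_{\ell,k})$ and $\operatorname{Bern}(\widehat B^{(0)}_\gamma)$. *)

From HB Require Import structures.
From mathcomp Require Import all_boot all_order all_algebra.
From mathcomp Require Import all_classical all_reals all_analysis.
Import Order.TTheory GRing.Theory Num.Theory.
Set Implicit Arguments. Unset Strict Implicit.
Local Open Scope ring_scope.

Section Model.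
Variable R : realType.
(* n vertices, K = K^* blocks, G = index set Gamma *)
Variables (n K : nat) (G : finType).
Variable blk : 'I_n -> 'I_K.          (* block membership: v in B_(blk v) *)
Variable gam : 'I_K -> 'I_K -> G.     (* {l,k} in gamma_B  <->  gam l k = gamma *)

(* unordered vertex pairs {v,v'} represented as (v,v') with v < v' *)
Definition edge := {p : 'I_n * 'I_n | (p.1 < p.2)%N}.
Definition graph := {ffun edge -> bool}.

Definition adj (g : graph) (v v' : 'I_n) : R :=
  match (insub (v, v') : option edge) with
  | Some e => (g e)%:R
  | None => match (insub (v', v) : option edge) with
            | Some e => (g e)%:R
            | None => 0
            end
  end.

Definition blockpairs (l k : 'I_K) : {set 'I_n * 'I_n} :=
  [set p : 'I_n * 'I_n | (blk p.1 == l) && (blk p.2 == k) && ((l != k) || (p.1 < p.2)%N)].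

Definition nlk (l k : 'I_K) : nat := #|blockpairs l k|.

(* n_** = min_{l,k} n_{l,k}; n*n is an upper bound of every n_{l,k}, used as the
   neutral element of the min *)
Definition nstar : nat := \big[minn/(n * n)%N]_(p : 'I_K * 'I_K) nlk p.1 p.2.

Definition Slk (g : graph) (l k : 'I_K) : R :=
  \sum_(p in blockpairs l k) adj g p.1 p.2.

Definition Bhat1 (g : graph) (l k : 'I_K) : R := Slk g l k / (nlk l k)%:R.

(* unordered block pairs {l,k}, represented as (l,k) with l <= k *)
Definition upairs : {set 'I_K * 'I_K} := [set p : 'I_K * 'I_K | (p.1 <= p.2)%N].

Definition gamB (c : G) : {set 'I_K * 'I_K} := [set p in upairs | gam p.1 p.2 == c].

Definition ngam (c : G) : nat := \sum_(p in gamB c) nlk p.1 p.2.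

Definition Bhat0 (g : graph) (c : G) : R :=
  (\sum_(p in gamB c) Slk g p.1 p.2) / (ngam c)%:R.

(* x log(x/y) with the convention 0 log 0 = 0 *)
Definition xlogy (x y : R) : R := if x == 0 then 0 else x * ln (x / y).

Definition klBern (p q : R) : R := xlogy p q + xlogy (1 - p) (1 - q).

Definition m2lambdaT (g : graph) : R :=
  2 * \sum_(c : G) \sum_(p in gamB c)
        (nlk p.1 p.2)%:R * klBern (Bhat1 g p.1 p.2) (Bhat0 g c).

Definition DeltaBIC (g : graph) : R :=
  m2lambdaT g - (\sum_(c : G) ((#|gamB c|)%:R - 1)) * ln ('C(n, 2))%:R.

Definition edgeprob (B0 : G -> R) (e : edge) : R :=
  B0 (gam (blk (val e).1) (blk (val e).2)).

Definition P0 (B0 : G -> R) (E : pred graph) : R :=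
  \sum_(g : graph | E g)
     \prod_(e : edge) (if g e then edgeprob B0 e else 1 - edgeprob B0 e).

End Model.

From HB Require Import structures.
From mathcomp Require Import all_boot all_order all_algebra.
From mathcomp Require Import all_classical all_reals all_analysis.
From mathcomp Require Import ring lra zify.
Import Order.TTheory GRing.Theory Num.Theory.
Local Open Scope ring_scope.

(* The complement event is handled by a Chernoff bound.  On [DeltaBIC >= 0] the
   statistic -2 lambda_T exceeds d log C(n,2), where d = sum_gamma (|gamma_B| - 1).
   Replacing the pooled estimate B^(0)_gamma by the true parameter only increases the
   Kullback-Leibler sum, so -lambda_T <= sum_p Z_p, where Z_p = m_p KL(S_p/m_p || q_p) is
   the generalized log-likelihood ratio of the block pair p.  Now exp(Z_p/2), the square
   root of the maximal likelihood ratio, is dominated by a mixture of likelihood ratios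
   with total weight at most 4 (telescoping weights on either side of q_p m_p).  Every
   likelihood ratio has mean one under the null and distinct block pairs are independent,
   so E[exp(sum_p Z_p/2)] <= 4^(K^2), and Markov's inequality gives
   P_0[DeltaBIC >= 0] <= 4^(K^2) exp(-d log C(n,2)/4).  Since d >= 8 c_2 (K^2 + K), this
   is below the claimed bound as soon as log n >= 3/c_2. *)

Section KullbackLeibler.
Context {R : realType}.
Implicit Types (a q x y : R).

Lemma ln_le_subr1 {x} : 0 < x -> ln x <= x - 1.
Proof. by move=> x_gt0; have := @le_ln1Dx R (x - 1); rewrite addrCA subrr addr0; apply; lra. Qed.

Lemma xlogy_ge_subr {x y} : 0 <= x -> 0 < y -> x - y <= xlogy x y.
Proof.
move=> x_ge0 y_gt0; rewrite /xlogy; have [->|x_neq0] := eqVneq x 0; first lra.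
have x_gt0 : 0 < x by rewrite lt0r x_neq0.
have := ln_le_subr1 (divr_gt0 y_gt0 x_gt0); rewrite !ln_div ?posrE // => le_ln.
have -> : x - y = x * (1 - y / x) by field; rewrite gt_eqF.
by rewrite ler_pM2l //; lra.
Qed.

Lemma klBern_ge0 {a q} : 0 <= a <= 1 -> 0 < q < 1 -> 0 <= klBern a q.
Proof.
move=> /andP[a_ge0 a_le1] /andP[q_gt0 q_lt1]; rewrite /klBern.
have := xlogy_ge_subr a_ge0 q_gt0.
have : 1 - a - (1 - q) <= xlogy (1 - a) (1 - q) by apply: xlogy_ge_subr; lra.
lra.
Qed.



Lemma xlogy_split {x y q} : 0 <= x -> 0 < q -> (0 < x -> 0 < y) ->
  xlogy x q = xlogy x y + x * ln (y / q).
Proof.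
move=> x_ge0 q_gt0 y_pos; rewrite /xlogy; have [->|x_neq0] := eqVneq x 0.
  by rewrite mul0r addr0.
have x_gt0 : 0 < x by rewrite lt0r x_neq0.
have y_gt0 := y_pos x_gt0.
by rewrite -mulrDr !ln_div ?posrE // addrA subrK.
Qed.

Lemma klBern_split {a x q} : 0 <= a <= 1 -> 0 < q < 1 ->
  (0 < a -> 0 < x) -> (0 < 1 - a -> 0 < 1 - x) ->
  klBern a q = klBern a x + (a * ln (x / q) + (1 - a) * ln ((1 - x) / (1 - q))).
Proof.
move=> /andP[a_ge0 a_le1] /andP[q_gt0 q_lt1] x_pos x'_pos; rewrite /klBern.
rewrite (xlogy_split a_ge0 q_gt0 x_pos) (xlogy_split _ _ x'_pos) ?subr_ge0 ?subr_gt0 //.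
by rewrite addrACA.
Qed.

Lemma klBern_xx x : klBern x x = 0.
Proof.
have xlogy_xx y : xlogy y y = 0.
  by rewrite /xlogy; case: eqP => // /eqP y_neq0; rewrite divff // ln1 mulr0.
by rewrite /klBern !xlogy_xx addr0.
Qed.

Lemma sum_klBern_pooled_le (I : finType) (A : {pred I}) (w a : I -> R) (q : R) :
  0 < q < 1 -> (forall i, 0 <= w i) -> (forall i, 0 <= a i <= 1) ->
  \sum_(i in A) w i * klBern (a i) ((\sum_(i in A) w i * a i) / \sum_(i in A) w i)
  <= \sum_(i in A) w i * klBern (a i) q.
Proof.
move=> q01 w_ge0 a01; have wa_ge0 i : 0 <= w i * a i by have /andP[? ?] := a01 i; rewrite mulr_ge0.
have w'a_ge0 i : 0 <= w i * (1 - a i) by have /andP[? ?] := a01 i; rewrite mulr_ge0 ?subr_ge0.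
have term_le (F : I -> R) i : (forall j, 0 <= F j) -> i \in A -> F i <= \sum_(j in A) F j.
  by move=> F_ge0 iA; rewrite (bigD1 i) //= lerDl sumr_ge0.
set W := \sum_(i in A) w i; set Sa := \sum_(i in A) w i * a i; set x := Sa / W.
have [W0|W_neq0] := eqVneq W 0.
  have w0 := psumr_eq0P (fun i _ => w_ge0 i) W0.
  by rewrite !big1 // => i iA; rewrite w0 ?mul0r.
have W_gt0 : 0 < W by rewrite lt0r W_neq0 sumr_ge0.
have Wx : W * x = Sa by rewrite mulrC divfK.
have W'x : W * (1 - x) = \sum_(i in A) w i * (1 - a i).
  by rewrite mulrBr mulr1 Wx /Sa -sumrB; apply: eq_bigr => i _; rewrite mulrBr mulr1.
have x01 : 0 <= x <= 1.
  rewrite divr_ge0 ?sumr_ge0 ?ler_pdivrMr // mul1r.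
  by apply: ler_sum => i _; have /andP[? ?] := a01 i; rewrite ler_piMr.
set L1 := ln (x / q); set L2 := ln ((1 - x) / (1 - q)).
have split_term i : i \in A ->
    w i * klBern (a i) q = w i * klBern (a i) x + w i * (a i * L1 + (1 - a i) * L2).
  move=> iA; have [->|w_neq0] := eqVneq (w i) 0; first by rewrite !mul0r addr0.
  have w_gt0 : 0 < w i by rewrite lt0r w_neq0 w_ge0.
  rewrite -mulrDr (klBern_split (x := x) (a01 i) q01) // => [a_gt0|a'_gt0].
    by rewrite divr_gt0 // (lt_le_trans _ (term_le _ i wa_ge0 iA)) // mulr_gt0.
  by rewrite -(ltr_pM2l W_gt0) mulr0 W'x (lt_le_trans _ (term_le _ i w'a_ge0 iA)) ?mulr_gt0.
rewrite (eq_bigr _ split_term) big_split /= lerDl.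
have -> : \sum_(i in A) w i * (a i * L1 + (1 - a i) * L2) = W * klBern x q.
  rewrite (klBern_split (x := x) x01 q01) // klBern_xx add0r mulrDr.
  rewrite (mulrA W x) (mulrA W (1 - x)) Wx W'x.
  by rewrite !mulr_suml -big_split /=; apply: eq_bigr => i _; rewrite mulrDr !mulrA.
by apply: mulr_ge0; [exact: ltW | exact: klBern_ge0].
Qed.

End KullbackLeibler.

Section BernoulliLikelihoodRatio.
Context {R : realType}.
Implicit Types (a q x : R) (m S k : nat).

Lemma ratio_ge0_le1 {m S} : (S <= m)%N -> 0 <= (S%:R / m%:R : R) <= 1.
Proof.
move=> le_Sm; rewrite divr_ge0 //=; have [->|m_gt0] := posnP m.
  by rewrite invr0 mulr0 ler01.
by rewrite ler_pdivrMr ?ltr0n // mul1r ler_nat.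
Qed.

Lemma natr_mul_ratio {m S} : (S <= m)%N -> m%:R * (S%:R / m%:R) = S%:R :> R.
Proof.
have [->|m_gt0 _] := posnP m; first by rewrite leqn0 => /eqP ->; rewrite mul0r.
by rewrite mulrC divfK // pnatr_eq0 -lt0n.
Qed.

Definition bern_lr a q m S : R := (a / q) ^+ S * ((1 - a) / (1 - q)) ^+ (m - S).

Definition bern_llr q m S : R := m%:R * klBern (S%:R / m%:R) q.

Lemma bern_llr_ge0 {q m S} : 0 < q < 1 -> (S <= m)%N -> 0 <= bern_llr q m S.
Proof.
by move=> q01 le_Sm; rewrite mulr_ge0 ?ler0n // klBern_ge0 // ratio_ge0_le1.
Qed.

Lemma expR_natr_mul_xlogy {m k x y} : 0 <= x -> 0 < y -> m%:R * x = k%:R ->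
  expR (m%:R * xlogy x y) = (x / y) ^+ k.
Proof.
move=> x_ge0 y_gt0 mx_k; rewrite /xlogy; have [x0|x_neq0] := eqVneq x 0.
  move: mx_k; rewrite x0 !mulr0 expR0 => /esym/eqP.
  by rewrite pnatr_eq0 => /eqP ->.
have x_gt0 : 0 < x by rewrite lt0r x_neq0.
by rewrite mulrA mx_k expRM_natl lnK // posrE divr_gt0.
Qed.

Lemma expR_bern_llr q m S : 0 < q < 1 -> (S <= m)%N ->
  expR (bern_llr q m S) = bern_lr (S%:R / m%:R) q m S.
Proof.
move=> /andP[q_gt0 q_lt1] le_Sm; have /andP[x_ge0 x_le1] := ratio_ge0_le1 le_Sm.
rewrite /bern_llr /klBern mulrDr expRD.
rewrite (expR_natr_mul_xlogy x_ge0 q_gt0 (natr_mul_ratio le_Sm)).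
rewrite (@expR_natr_mul_xlogy m (m - S)) ?subr_ge0 ?subr_gt0 //.
by rewrite mulrBr mulr1 natr_mul_ratio // natrB.
Qed.

Lemma bern_lr_ge0 a q m S : 0 <= a <= 1 -> 0 < q < 1 -> 0 <= bern_lr a q m S.
Proof.
move=> /andP[a_ge0 a_le1] /andP[q_gt0 q_lt1].
by rewrite mulr_ge0 // exprn_ge0 // divr_ge0 //; lra.
Qed.

Lemma bern_lr_compl a q m S : (S <= m)%N ->
  bern_lr a q m S = bern_lr (1 - a) (1 - q) m (m - S).
Proof. by move=> le_Sm; rewrite /bern_lr subKn // !subKr mulrC. Qed.

Lemma bern_llr_compl q m S : (S <= m)%N ->
  bern_llr q m S = bern_llr (1 - q) m (m - S).
Proof.
move=> le_Sm; rewrite /bern_llr; have [->|m_gt0] := posnP m; first by rewrite !mul0r.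
have -> : (m - S)%:R / m%:R = 1 - S%:R / m%:R :> R.
  by rewrite natrB // mulrBl divff // pnatr_eq0 -lt0n.
by rewrite /klBern !subKr addrC.
Qed.

Lemma bern_lr_chain x a q m S : a != 0 -> 1 - a != 0 ->
  bern_lr x q m S = bern_lr x a m S * bern_lr a q m S.
Proof.
move=> a_neq0 a_neq1; rewrite /bern_lr mulrACA -!exprMn.
by congr (_ ^+ _ * _ ^+ _); rewrite mulrA divfK.
Qed.

Lemma bern_lr_le_mle {a q m S} : 0 < a < 1 -> 0 < q < 1 -> (S <= m)%N ->
  bern_lr a q m S <= bern_lr (S%:R / m%:R) q m S.
Proof.
move=> a01 q01 le_Sm; have /andP[a_gt0 a_lt1] := a01.
rewrite [leRHS](@bern_lr_chain _ a) ?gt_eqF ?subr_gt0 // -expR_bern_llr //.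
apply: ler_peMl; first by apply: bern_lr_ge0 => //; lra.
by apply: le_trans (expR_ge1Dx _); rewrite lerDl bern_llr_ge0.
Qed.

Lemma bern_lr_homo {a q m k S} : 0 < q < 1 -> q <= a <= 1 -> (k <= S <= m)%N ->
  bern_lr a q m k <= bern_lr a q m S.
Proof.
move=> /andP[q_gt0 q_lt1] /andP[le_qa a_le1] /andP[le_kS le_Sm].
rewrite /bern_lr ler_pM ?exprn_ge0 ?divr_ge0 //; try lra.
  by rewrite ler_weXn2l // ler_pdivlMr // mul1r.
rewrite ler_wiXn2l ?leq_sub2l ?divr_ge0 //; try lra.
by rewrite ler_pdivrMr ?mul1r; lra.
Qed.

End BernoulliLikelihoodRatio.

Section TelescopicWeights.
Context {R : realType}.

Lemma subr_div_sqr_le_invB (u w : R) : 1 <= u -> u <= w -> (w - u) / w ^+ 2 <= u^-1 - w^-1.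
Proof.
move=> u_ge1 le_uw; have u_gt0 : 0 < u by lra.
have w_gt0 : 0 < w by lra.
have -> : u^-1 - w^-1 = (w - u) / (u * w) by field; rewrite !gt_eqF.
rewrite ler_wpM2l ?subr_ge0 // lef_pV2 ?posrE ?mulr_gt0 ?exprn_gt0 //.
by rewrite expr2 ler_pM2r.
Qed.

Definition prev_val (v : nat -> R) k : R := if k is k'.+1 then v k' else 0.

Definition tel_weight (v : nat -> R) k : R := (v k - prev_val v k) / v k ^+ 2.

Lemma tel_weight_eq0 v k : v k = 0 -> tel_weight v k = 0.
Proof. by move=> vk0; rewrite /tel_weight vk0 expr0n invr0 mulr0. Qed.

Variables (v : nat -> R) (m : nat).
Hypothesis v_ge0 : forall k, 0 <= v k.
Hypothesis v_ge1 : forall k, v k != 0 -> 1 <= v k.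
Hypothesis v_homo : forall k, (k < m)%N -> v k <= v k.+1.
Hypothesis v_eq0 : forall k, (m < k)%N -> v k = 0.

Lemma prev_val_ge0 k : 0 <= prev_val v k.
Proof. by case: k. Qed.

Lemma prev_val_ge1 {k} : prev_val v k != 0 -> 1 <= prev_val v k.
Proof. by case: k => [|k]; [rewrite eqxx | exact: v_ge1]. Qed.

Lemma prev_val_le {k} : (k <= m)%N -> prev_val v k <= v k.
Proof. by case: k => [|k] le_km; [exact: v_ge0 | exact: v_homo]. Qed.

Lemma tel_weight_ge0 k : 0 <= tel_weight v k.
Proof.
have [le_km|lt_mk] := leqP k m; last by rewrite tel_weight_eq0 ?v_eq0.
by rewrite divr_ge0 ?exprn_ge0 ?subr_ge0 ?prev_val_le.
Qed.

Lemma tel_weight_mul_sqr k : (k <= m)%N -> tel_weight v k * v k ^+ 2 = v k - prev_val v k.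
Proof.
move=> le_km; have [vk0|vk_neq0] := eqVneq (v k) 0.
  have := prev_val_le le_km; have := prev_val_ge0 k; rewrite vk0 => ? ?.
  by rewrite tel_weight_eq0 // mul0r; lra.
by rewrite divfK // expf_neq0.
Qed.

Lemma sum_tel_weight_mul_sqr S : (S <= m)%N ->
  \sum_(k < S.+1) tel_weight v k * v k ^+ 2 = v S.
Proof.
move=> le_Sm; rewrite (eq_bigr (fun k : 'I_S.+1 => prev_val v k.+1 - prev_val v k)).
  by rewrite -(big_mkord xpredT (fun k => prev_val v k.+1 - prev_val v k)) telescope_sumr // subr0.
by move=> k _; rewrite tel_weight_mul_sqr // (leq_trans _ le_Sm) // -ltnS.
Qed.

(* The value 2 at 0 pays for the first nonzero weight, which is (v k)^-1 <= 1. *)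
Let potential (x : R) : R := if x == 0 then 2 else x^-1.

Lemma tel_weight_le_potential k : (k <= m)%N ->
  tel_weight v k <= potential (prev_val v k) - potential (v k).
Proof.
move=> le_km; have p_ge0 := prev_val_ge0 k; have le_pv := prev_val_le le_km.
rewrite /potential; have [vk0|vk_neq0] := eqVneq (v k) 0.
  have -> : prev_val v k = 0 by lra.
  by rewrite tel_weight_eq0 // eqxx subrr.
have vk_ge1 := v_ge1 _ vk_neq0; have [p0|p_neq0] := eqVneq (prev_val v k) 0.
  rewrite /tel_weight p0 subr0 expr2 invfM mulrA divff // mul1r.
  have : (v k)^-1 <= 1 by rewrite invf_le1 //; lra.
  lra.
by rewrite /tel_weight; apply: subr_div_sqr_le_invB (prev_val_ge1 p_neq0) le_pv.
Qed.

Lemma sum_tel_weight_le2 : \sum_(k < m.+1) tel_weight v k <= 2.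
Proof.
pose f k := - potential (prev_val v k).
apply: (@le_trans _ _ (\sum_(k < m.+1) (f k.+1 - f k))).
  by apply: ler_sum => k _; rewrite /f opprK addrC tel_weight_le_potential // -ltnS.
rewrite -(big_mkord xpredT (fun k => f k.+1 - f k)) telescope_sumr // /f /= /potential eqxx.
by case: eqP => _; [lra | have := v_ge0 m; rewrite -invr_ge0; lra].
Qed.

End TelescopicWeights.

Section OrdinalSums.
Context {R : numDomainType}.
Variables (n N : nat) (F : nat -> R).
Hypothesis le_nN : (n <= N)%N.

Lemma ler_sum_ord_widen : (forall k, (k < N)%N -> 0 <= F k) ->
  \sum_(k < n) F k <= \sum_(k < N) F k.
Proof.
move=> F_ge0; rewrite (big_ord_widen N F le_nN) [leRHS](bigID (fun k : 'I_N => (k < n)%N)) /=.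
by rewrite lerDl sumr_ge0 // => k _; apply: F_ge0.
Qed.

Lemma sum_ord_widen_eq0 : (forall k, (n <= k)%N -> F k = 0) ->
  \sum_(k < N) F k = \sum_(k < n) F k.
Proof.
move=> F_eq0; rewrite (big_ord_widen N F le_nN) [LHS](bigID (fun k : 'I_N => (k < n)%N)) /=.
by rewrite [X in _ + X]big1 ?addr0 // => k; rewrite -leqNgt => /F_eq0.
Qed.

End OrdinalSums.

Section MixtureDomination.
Context {R : realType}.
Implicit Types (q : R) (m k S : nat).

Definition root_lr q m k : R := expR (bern_llr q m k / 2).

Definition upper_root q m k : R :=
  if (q * m%:R <= k%:R) && (k <= m)%N then root_lr q m k else 0.

Variables (q : R) (m : nat).
Hypothesis q01 : 0 < q < 1.

Lemma root_lr_ge1 k : (k <= m)%N -> 1 <= root_lr q m k.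
Proof.
move=> le_km; apply: le_trans (expR_ge1Dx _); rewrite lerDl divr_ge0 //.
exact: bern_llr_ge0.
Qed.

Lemma root_lr_sqr k : (k <= m)%N -> root_lr q m k ^+ 2 = bern_lr (k%:R / m%:R) q m k.
Proof. by move=> le_km; rewrite -expRM_natl mulrC divfK ?pnatr_eq0 // expR_bern_llr. Qed.

Lemma ratio_ge k : (0 < m)%N -> q * m%:R <= k%:R -> q <= k%:R / m%:R.
Proof. by move=> m_gt0 le_qm_k; rewrite ler_pdivlMr ?ltr0n. Qed.

Lemma root_lr_homo k : q * m%:R <= k%:R -> (k < m)%N -> root_lr q m k <= root_lr q m k.+1.
Proof.
move=> le_qm_k lt_km; have /andP[q_gt0 q_lt1] := q01.
have m_gt0 : (0 < m)%N by apply: leq_ltn_trans lt_km.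
have k_gt0 : (0 < k)%N.
  rewrite lt0n; apply/negP => /eqP k0; move: le_qm_k; rewrite k0.
  have : 0 < q * m%:R by rewrite mulr_gt0 ?ltr0n.
  lra.
rewrite ler_expR ler_pM2r // -ler_expR !expR_bern_llr ?(ltnW lt_km) //.
apply: (le_trans _ (bern_lr_le_mle (a := k%:R / m%:R) _ q01 lt_km)).
  apply: bern_lr_homo; rewrite ?leqnSn ?lt_km // ratio_ge //=.
  by have /andP[] := ratio_ge0_le1 (R:=R) (ltnW lt_km).
by rewrite divr_gt0 ?ltr0n //= ltr_pdivrMr ?ltr0n // mul1r ltr_nat.
Qed.

Lemma upper_root_ge0 k : 0 <= upper_root q m k.
Proof. by rewrite /upper_root; case: ifP => _; rewrite ?expR_ge0. Qed.

Lemma upper_root_ge1 k : upper_root q m k != 0 -> 1 <= upper_root q m k.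
Proof.
by rewrite /upper_root; case: ifP => [/andP[_ /root_lr_ge1]|_] //; rewrite eqxx.
Qed.

Lemma upper_root_eq0 k : (m < k)%N -> upper_root q m k = 0.
Proof. by move=> lt_mk; rewrite /upper_root leqNgt lt_mk andbF. Qed.

Lemma upper_root_homo k : (k < m)%N -> upper_root q m k <= upper_root q m k.+1.
Proof.
move=> lt_km; rewrite {1}/upper_root (ltnW lt_km) andbT.
case: ifP => [le_qm_k|_]; last exact: upper_root_ge0.
have le_qm_Sk : q * m%:R <= k.+1%:R by apply: le_trans le_qm_k _; rewrite ler_nat.
by rewrite /upper_root le_qm_Sk lt_km; apply: root_lr_homo.
Qed.

Lemma upper_root_sqr_le k S : (k <= S <= m)%N ->
  upper_root q m k ^+ 2 <= bern_lr (k%:R / m%:R) q m S.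
Proof.
move=> /andP[le_kS le_Sm]; have le_km := leq_trans le_kS le_Sm.
have lr_ge0 : 0 <= bern_lr (k%:R / m%:R) q m S by rewrite bern_lr_ge0 ?ratio_ge0_le1.
rewrite /upper_root le_km andbT; case: ifP => [le_qm_k|_]; last by rewrite expr0n.
rewrite root_lr_sqr //; have [->|lt_kS] := eqVneq k S; first by [].
apply: bern_lr_homo; rewrite ?le_kS ?le_Sm // ratio_ge //=; last first.
  by move: lt_kS le_kS le_Sm; lia.
by have /andP[] := ratio_ge0_le1 (R:=R) le_km.
Qed.

Lemma root_lr_le_upper_mix S : (S <= m)%N -> q * m%:R <= S%:R ->
  root_lr q m S <= \sum_(k < m.+1) tel_weight (upper_root q m) k * bern_lr (k%:R / m%:R) q m S.
Proof.
move=> le_Sm le_qm_S.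
have tw_ge0 := tel_weight_ge0 _ _ upper_root_ge0 upper_root_homo upper_root_eq0.
have -> : root_lr q m S = upper_root q m S by rewrite /upper_root le_qm_S le_Sm.
rewrite -(sum_tel_weight_mul_sqr _ _ upper_root_ge0 upper_root_homo _ le_Sm).
apply: (le_trans _ (ler_sum_ord_widen S.+1 m.+1 (fun k => tel_weight (upper_root q m) k *
  bern_lr (k%:R / m%:R) q m S) le_Sm _)); last first.
  by move=> k le_km; rewrite mulr_ge0 ?bern_lr_ge0 ?ratio_ge0_le1.
apply: ler_sum => k _; rewrite ler_wpM2l // upper_root_sqr_le //.
by rewrite -ltnS ltn_ord.
Qed.

End MixtureDomination.

Section Mixture.
Context {R : realType} {M : nat}.

(* The index (true, k) stands for the alternative k/m, used when S >= q m; the index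
   (false, k) for 1 - k/m, used when S < q m, where it is the same construction for
   1 - q and m - S. *)
Definition mix_weight (q : R) m (j : bool * 'I_M) : R :=
  tel_weight (upper_root (if j.1 then q else 1 - q) m) j.2.

Definition mix_param m (j : bool * 'I_M) : R :=
  if j.1 then j.2%:R / m%:R else 1 - j.2%:R / m%:R.

Lemma sum_bool_ord (F : bool * 'I_M -> R) :
  \sum_j F j = \sum_(i < M) F (true, i) + \sum_(i < M) F (false, i).
Proof.
rewrite -(big_bool _ (fun b => \sum_(i < M) F (b, i))) pair_big.
by apply: eq_bigr => -[].
Qed.

Variables (q : R) (m : nat).
Hypotheses (q01 : 0 < q < 1) (lt_mM : (m < M)%N).

Let compl_q01 : 0 < 1 - q < 1.
Proof. by move: q01 => /andP[? ?]; apply/andP; split; lra. Qed.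

Let sel_q01 (b : bool) : 0 < (if b then q else 1 - q) < 1.
Proof. by case: b. Qed.

Lemma mix_weight_eq0 (j : bool * 'I_M) : (m < j.2)%N -> mix_weight q m j = 0.
Proof. by move=> lt_mj; rewrite /mix_weight tel_weight_eq0 // upper_root_eq0. Qed.

Lemma mix_weight_ge0 (j : bool * 'I_M) : 0 <= mix_weight q m j.
Proof.
apply: (tel_weight_ge0 _ m);
  [exact: upper_root_ge0 | exact: upper_root_homo _ _ (sel_q01 _) | exact: upper_root_eq0].
Qed.

Lemma mix_term_ge0 (j : bool * 'I_M) S : 0 <= mix_weight q m j * bern_lr (mix_param m j) q m S.
Proof.
have [le_jm|lt_mj] := leqP j.2 m; last by rewrite mix_weight_eq0 ?mul0r.
rewrite mulr_ge0 ?mix_weight_ge0 ?bern_lr_ge0 // /mix_param.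
by have /andP[? ?] := ratio_ge0_le1 (R:=R) le_jm; case: ifP => _; apply/andP; split; lra.
Qed.

Let sum_tel_weight_widen q' (G : nat -> R) :
  \sum_(i < M) tel_weight (upper_root q' m) i * G i =
  \sum_(k < m.+1) tel_weight (upper_root q' m) k * G k.
Proof.
apply: (sum_ord_widen_eq0 _ _ (fun k => tel_weight (upper_root q' m) k * G k) lt_mM) => k lt_mk.
by rewrite tel_weight_eq0 ?mul0r // upper_root_eq0.
Qed.

Lemma sum_mix_weight_le4 : \sum_j mix_weight q m j <= 4.
Proof.
have half_le2 (q' : R) : 0 < q' < 1 -> \sum_(i < M) tel_weight (upper_root q' m) i <= 2.
  move=> q'01; rewrite (sum_ord_widen_eq0 _ _ _ lt_mM) => [|k lt_mk]; last first.
    by rewrite tel_weight_eq0 // upper_root_eq0.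
  by apply: sum_tel_weight_le2;
    [exact: upper_root_ge0 | exact: upper_root_ge1 | exact: upper_root_homo].
rewrite sum_bool_ord /mix_weight /=.
by have := half_le2 _ q01; have := half_le2 _ compl_q01; lra.
Qed.

Lemma root_lr_le_mix S : (S <= m)%N ->
  root_lr q m S <= \sum_j mix_weight q m j * bern_lr (mix_param m j) q m S.
Proof.
move=> le_Sm; have half_ge0 b :
    0 <= \sum_(i < M) mix_weight q m (b, i) * bern_lr (mix_param m (b, i)) q m S.
  by apply: sumr_ge0 => i _; apply: mix_term_ge0.
move: (half_ge0 true) (half_ge0 false); rewrite sum_bool_ord /mix_weight /mix_param /=.
rewrite (sum_tel_weight_widen q (fun k => bern_lr (k%:R / m%:R) q m S)).
rewrite (sum_tel_weight_widen (1 - q) (fun k => bern_lr (1 - k%:R / m%:R) q m S)).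
have [le_qm_S|lt_S_qm] := lerP (q * m%:R) S%:R.
  by have := root_lr_le_upper_mix _ _ q01 _ le_Sm le_qm_S; lra.
have le_qm_S' : (1 - q) * m%:R <= (m - S)%:R by rewrite natrB // mulrBl mul1r; lra.
have -> : \sum_(k < m.+1) tel_weight (upper_root (1 - q) m) k * bern_lr (1 - k%:R / m%:R) q m S
    = \sum_(k < m.+1) tel_weight (upper_root (1 - q) m) k * bern_lr (k%:R / m%:R) (1 - q) m (m - S).
  by apply: eq_bigr => k _; rewrite bern_lr_compl // subKr.
have := root_lr_le_upper_mix _ _ compl_q01 _ (leq_subr S m) le_qm_S'.
by rewrite /root_lr -bern_llr_compl //; lra.
Qed.

End Mixture.

Lemma sum_le_markov {R : realFieldType} (T : finType) (A : pred T) (w f : T -> R) t :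
  0 < t -> (forall x, 0 <= w x) -> (forall x, 0 <= f x) -> (forall x, A x -> t <= f x) ->
  \sum_(x | A x) w x <= (\sum_x w x * f x) / t.
Proof.
move=> t_gt0 w_ge0 f_ge0 A_f; rewrite ler_pdivlMr // mulr_suml.
rewrite [leRHS](bigID A) /= -[leLHS]addr0 lerD ?sumr_ge0 // => [|x _].
  by apply: ler_sum => x Ax; rewrite ler_wpM2l ?A_f.
exact: mulr_ge0.
Qed.

Section BlockBernoulli.
Context {R : realType} {E P : finType}.
Variables (bl : E -> P) (q : P -> R).
Hypothesis q01 : forall p, 0 < q p < 1.

Definition block p : {set E} := [set e | bl e == p].

Definition block_size p := #|block p|.

Definition block_count (g : {ffun E -> bool}) p := #|[set e in block p | g e]|.

Lemma block_count_le g p : (block_count g p <= block_size p)%N.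
Proof. by rewrite /block_count /block_size setIdE subset_leq_card // subsetIl. Qed.

Definition bern_weight (g : {ffun E -> bool}) : R :=
  \prod_e (if g e then q (bl e) else 1 - q (bl e)).

Definition tilt (a : P -> R) (g : {ffun E -> bool}) : R :=
  \prod_e (if g e then a (bl e) / q (bl e) else (1 - a (bl e)) / (1 - q (bl e))).

Lemma sum_ffun_prod (F : E -> bool -> R) :
  \sum_(g : {ffun E -> bool}) \prod_e F e (g e) = \prod_e (F e true + F e false).
Proof. by rewrite -bigA_distr_bigA; apply: eq_bigr => e _; rewrite big_bool. Qed.

Lemma bern_weight_ge0 g : 0 <= bern_weight g.
Proof.
by apply: prodr_ge0 => e _; have /andP[? ?] := q01 (bl e); case: (g e); lra.
Qed.

Lemma sum_bern_weight : \sum_g bern_weight g = 1.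
Proof.
rewrite (sum_ffun_prod (fun e b => if b then q (bl e) else 1 - q (bl e))).
by rewrite big1 // => e _; rewrite subrKC.
Qed.

Lemma sum_bern_weight_tilt a : \sum_g bern_weight g * tilt a g = 1.
Proof.
under eq_bigr do rewrite -big_split /=.
rewrite (sum_ffun_prod (fun e b => (if b then q (bl e) else 1 - q (bl e)) *
  (if b then a (bl e) / q (bl e) else (1 - a (bl e)) / (1 - q (bl e))))).
apply: big1 => e _; have /andP[q_gt0 q_lt1] := q01 (bl e).
by rewrite /= mulrC divfK ?gt_eqF // mulrC divfK ?subrKC // gt_eqF ?subr_gt0.
Qed.

Lemma tilt_blocks a g :
  tilt a g = \prod_p bern_lr (a p) (q p) (block_size p) (block_count g p).
Proof.
rewrite /tilt (partition_big bl xpredT) //=; apply: eq_bigr => p _.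
rewrite (bigID (fun e => g e)) /=.
rewrite (eq_bigr (fun _ => a p / q p)); last by move=> e /andP[/eqP <- ->].
rewrite [X in _ * X](eq_bigr (fun _ => (1 - a p) / (1 - q p))); last first.
  by move=> e /andP[/eqP <- /negbTE ->].
rewrite !prodr_const /bern_lr /block_count /block_size; congr (_ ^+ _ * _ ^+ _).
  by apply: eq_card => e; rewrite !inE.
rewrite setIdE -(cardsID [set e | g e] (block p)) addKn.
by apply: eq_card => e; rewrite !inE andbC.
Qed.

Lemma expect_prod_mix (J : finType) (alpha a : P -> J -> R) :
  \sum_g bern_weight g *
    \prod_p \sum_j alpha p j * bern_lr (a p j) (q p) (block_size p) (block_count g p)
  = \prod_p \sum_j alpha p j.
Proof.
under [LHS]eq_bigr => g _ do rewrite bigA_distr_bigA big_distrr.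
rewrite exchange_big [RHS]bigA_distr_bigA; apply: eq_bigr => phi _ /=.
transitivity (\prod_p alpha p (phi p) *
    \sum_g bern_weight g * tilt (fun p => a p (phi p)) g).
  by rewrite mulr_sumr; apply: eq_bigr => g _; rewrite big_split tilt_blocks /= mulrCA.
by rewrite sum_bern_weight_tilt mulr1.
Qed.

End BlockBernoulli.

Section EdgeBlocks.
Context {R : realType} {n K : nat}.
Variable blk : 'I_n -> 'I_K.

(* The ordered pair representing e in [blockpairs blk l k] with l <= k. *)
Definition orient (e : edge n) : 'I_n * 'I_n :=
  if (blk (val e).1 <= blk (val e).2)%N then val e else ((val e).2, (val e).1).

Definition edge_block (e : edge n) : 'I_K * 'I_K := (blk (orient e).1, blk (orient e).2).

Lemma orient_inj : injective orient.
Proof.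
move=> e e' eq_o; apply: val_inj; move: eq_o (valP e) (valP e'); rewrite /orient.
case: (val e) (val e') => [a b] [c d] /=.
by case: ifP; case: ifP => _ _ [-> ->] // lt_dc lt_cd;
  move: (ltn_trans lt_cd lt_dc); rewrite ltnn.
Qed.

Lemma blockpairs_orient (l k : 'I_K) : (l <= k)%N ->
  blockpairs blk l k = orient @: block edge_block (l, k).
Proof.
move=> le_lk; apply/setP => -[v v']; rewrite inE /=; apply/idP/imsetP => [|[e]].
  move=> /andP[/andP[/eqP blk_v /eqP blk_v'] lk_or_lt].
  case: (ltngtP v v') => [lt_vv'|lt_v'v|eq_vv'].
  - exists (exist _ (v, v') lt_vv' : edge n); last by rewrite /orient /= blk_v blk_v' le_lk.
    by rewrite inE /edge_block /orient /= blk_v blk_v' le_lk /= blk_v blk_v'.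
  - have lt_lk : (l < k)%N.
      by rewrite ltn_neqAle le_lk andbT; move: lk_or_lt; rewrite ltnNge ltnW ?orbF.
    exists (exist _ (v', v) lt_v'v : edge n); last by rewrite /orient /= blk_v blk_v' leqNgt lt_lk.
    by rewrite inE /edge_block /orient /= blk_v blk_v' leqNgt lt_lk /= blk_v blk_v'.
  - by move: lk_or_lt; rewrite eq_vv' ltnn orbF -blk_v -blk_v' (val_inj eq_vv') eqxx.
rewrite inE /edge_block /orient; case: e => -[w w'] /= lt_ww'.
case: ifP => /= le_blk; rewrite xpair_eqE => /andP[/eqP <- /eqP <-] [-> ->] /=.
  by rewrite !eqxx /=; case: eqP => //= ->.
by rewrite !eqxx /= -val_eqE /= neq_ltn ltnNge le_blk.
Qed.

Lemma adj_sym (g : graph n) v v' : adj R g v v' = adj R g v' v.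
Proof.
rewrite /adj; case: insubP => [e1 lt1 _|_]; case: insubP => [e2 lt2 _|_] //=.
by move: (ltn_trans lt1 lt2); rewrite ltnn.
Qed.

Lemma adj_orient (g : graph n) e : adj R g (orient e).1 (orient e).2 = (g e)%:R.
Proof.
suff adj_val : adj R g (val e).1 (val e).2 = (g e)%:R.
  by rewrite /orient; case: ifP => _ //=; rewrite adj_sym.
by rewrite /adj -surjective_pairing valK.
Qed.

Lemma sumr_nat_bool (T : finType) (A : {pred T}) (b : T -> bool) :
  \sum_(x in A) (b x)%:R = #|[set x in A | b x]|%:R :> R.
Proof.
rewrite (bigID b) /= [X in _ + X]big1 ?addr0 => [|x /andP[_ /negbTE ->]] //.
rewrite (eq_bigr (fun=> 1)) => [|x /andP[_ ->]] //.
by rewrite sumr_const; congr (_%:R); apply: eq_card => x; rewrite !inE.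
Qed.

Lemma nlk_block_size (l k : 'I_K) : (l <= k)%N -> nlk blk l k = block_size edge_block (l, k).
Proof. by move=> le_lk; rewrite /nlk blockpairs_orient // card_imset //; exact: orient_inj. Qed.

Lemma Slk_block_count (g : graph n) (l k : 'I_K) : (l <= k)%N ->
  Slk R blk g l k = (block_count edge_block g (l, k))%:R.
Proof.
move=> le_lk; rewrite /Slk blockpairs_orient // big_imset /=; last exact: in2W orient_inj.
under eq_bigr do rewrite adj_orient.
by rewrite sumr_nat_bool.
Qed.

Lemma edgeprob_edge_block (G : finType) (gam : 'I_K -> 'I_K -> G) (B0 : G -> R) e :
  (forall l k, gam l k = gam k l) ->
  edgeprob blk gam B0 e = B0 (gam (edge_block e).1 (edge_block e).2).
Proof.
by move=> gam_sym; rewrite /edgeprob /edge_block /orient; case: ifP => //= _; rewrite gam_sym.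
Qed.

End EdgeBlocks.

Lemma card_upairs K : (#|upairs K| * 2 = K ^ 2 + K)%N.
Proof.
have card_setE (b : pred ('I_K * 'I_K)) : #|[set p | b p]| = (\sum_p b p)%N.
  by rewrite -sum1_card big_mkcond /=; apply: eq_bigr => p _; rewrite inE; case: (b p).
rewrite card_setE muln2 -addnn {2}(reindex_inj (h := fun p => (p.2, p.1))) /=; last first.
  by case=> ? ? [? ?] [-> ->].
rewrite -big_split /= (eq_bigr (fun p => 1 + (p.1 == p.2))%N); last first.
  move=> [i j] _ /=; case: ltngtP => [lt_ij|lt_ji|/val_inj ->]; last by rewrite eqxx.
    by rewrite -val_eqE /= (ltn_eqF lt_ij).
  by rewrite -val_eqE /= eq_sym (ltn_eqF lt_ji).
rewrite big_split /= sum1_card card_prod card_ord mulnn; congr (_ + _)%N.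
rewrite -(pair_big xpredT xpredT (fun i j => (i == j : nat))) /= -[RHS]card_ord -sum1_card.
apply: eq_bigr => i _; rewrite (bigD1 i) //= eqxx big1 // => j /negbTE.
by rewrite eq_sym => ->.
Qed.


Lemma sum_gamB {V : nmodType} {K : nat} {G : finType}
    (gam : 'I_K -> 'I_K -> G) (F : 'I_K * 'I_K -> V) :
  \sum_(c : G) \sum_(p in gamB gam c) F p = \sum_(p in upairs K) F p.
Proof.
rewrite (partition_big (fun p => gam p.1 p.2) xpredT) //=.
by apply: eq_bigr => c _; apply: eq_bigl => p; rewrite inE.
Qed.

Lemma sumr_gamB_sub1 {R : realType} {K : nat} {G : finType} (gam : 'I_K -> 'I_K -> G) :
  \sum_(c : G) ((#|gamB gam c|)%:R - 1) = (#|upairs K|)%:R - (#|G|)%:R :> R.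
Proof.
rewrite sumrB sumr_const; congr (_ - _); under eq_bigr do rewrite -sumr_const.
by rewrite (sum_gamB gam (fun _ => 1)) sumr_const.
Qed.

Section NullModel.
Context {R : realType} {n K : nat} {G : finType}.
Variables (blk : 'I_n -> 'I_K) (gam : 'I_K -> 'I_K -> G) (B0 : G -> R).
Hypothesis gam_sym : forall l k, gam l k = gam k l.
Hypothesis B0_01 : forall c, 0 < B0 c < 1.

Local Notation eblk := (edge_block blk).
Let q (p : 'I_K * 'I_K) := B0 (gam p.1 p.2).

Lemma m2lambdaT_le_sum_llr (g : graph n) :
  m2lambdaT R blk gam g / 2 <=
  \sum_p bern_llr (q p) (block_size eblk p) (block_count eblk g p).
Proof.
have gamB_upper c p : p \in gamB gam c -> (p.1 <= p.2)%N /\ gam p.1 p.2 = c.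
  by rewrite !inE => /andP[? /eqP].
rewrite /m2lambdaT mulrAC divff ?mul1r ?pnatr_eq0 //.
apply: (@le_trans _ _ (\sum_c \sum_(p in gamB gam c)
  bern_llr (q p) (block_size eblk p) (block_count eblk g p))).
  apply: ler_sum => c _.
  pose w p : R := (block_size eblk p)%:R.
  pose a p : R := (block_count eblk g p)%:R / (block_size eblk p)%:R.
  have wa p : w p * a p = (block_count eblk g p)%:R by rewrite natr_mul_ratio ?block_count_le.
  rewrite (eq_bigr (fun p => w p * klBern (a p) (Bhat0 R blk gam g c))); last first.
    move=> p /gamB_upper[le_p _].
    by rewrite /Bhat1 Slk_block_count // nlk_block_size // -!surjective_pairing.
  have -> : Bhat0 R blk gam g c = (\sum_(p in gamB gam c) w p * a p) / \sum_(p in gamB gam c) w p.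
    rewrite /Bhat0 /ngam natr_sum; congr (_ / _); apply: eq_bigr => p /gamB_upper[le_p _].
      by rewrite wa -Slk_block_count // -surjective_pairing.
    by rewrite nlk_block_size // -surjective_pairing.
  rewrite [leRHS](eq_bigr (fun p => w p * klBern (a p) (B0 c))); last first.
    by move=> p /gamB_upper[_ gam_p]; rewrite /bern_llr /q gam_p.
  by apply: sum_klBern_pooled_le => // p; apply: ratio_ge0_le1 (block_count_le _ _ _).
rewrite sum_gamB [leRHS](bigID (mem (upairs K))) /= lerDl sumr_ge0 // => p _.
exact: bern_llr_ge0 (B0_01 _) (block_count_le _ _ _).
Qed.

Lemma P0_sum_bern_weight (A : pred (graph n)) :
  P0 blk gam B0 A = \sum_(g | A g) bern_weight eblk q g.
Proof.
by apply: eq_bigr => g _; apply: eq_bigr => e _; rewrite edgeprob_edge_block.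
Qed.

Lemma P0_DeltaBIC_lt0_ge :
  1 - 4 ^+ (K * K) *
    expR (- ((\sum_(c : G) ((#|gamB gam c|)%:R - 1)) * ln ('C(n, 2))%:R / 4))
  <= P0 blk gam B0 (fun g => DeltaBIC R blk gam g < 0).
Proof.
set d := \sum_(c : G) _; set L := ln _; set T := expR (d * L / 4).
pose M := #|{: edge n}|.+1.
pose mix g p := \sum_(j : bool * 'I_M) mix_weight (q p) (block_size eblk p) j *
  bern_lr (mix_param (block_size eblk p) j) (q p) (block_size eblk p) (block_count eblk g p).
have size_lt p : (block_size eblk p < M)%N by rewrite ltnS max_card.
have mix_ge0 g p : 0 <= mix g p.
  by apply: sumr_ge0 => j _; apply: mix_term_ge0 _ _ (B0_01 _) _ _.
have T_le_mix g : ~~ (DeltaBIC R blk gam g < 0) -> T <= \prod_p mix g p.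
  rewrite -leNgt /DeltaBIC subr_ge0 -/d -/L => le_dL.
  apply: (@le_trans _ _ (\prod_p root_lr (q p) (block_size eblk p) (block_count eblk g p))).
    rewrite -expR_sum ler_expR -mulr_suml.
    have := m2lambdaT_le_sum_llr g; lra.
  apply: ler_prod => p _; rewrite expR_ge0 /=.
  exact: root_lr_le_mix _ _ (B0_01 _) (size_lt p) _ (block_count_le _ _ _).
rewrite P0_sum_bern_weight.
have := sum_bern_weight eblk q; rewrite (bigID (fun g => DeltaBIC R blk gam g < 0)) /=.
set S1 := \sum_(g | _) _; set S2 := \sum_(g | _) _ => total.
suff : S2 <= 4 ^+ (K * K) / T by rewrite expRN -/T; lra.
have q01 p : 0 < q p < 1 := B0_01 _.
apply: le_trans (sum_le_markov _ _ _ (fun g => \prod_p mix g p) T _ _ _ T_le_mix) _.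
- exact: expR_gt0.
- exact: bern_weight_ge0.
- by move=> g; apply: prodr_ge0 => p _; apply: mix_ge0.
rewrite /mix expect_prod_mix // ler_wpM2r ?invr_ge0 ?expR_ge0 //.
have -> : (K * K)%N = #|{: 'I_K * 'I_K}| by rewrite card_prod card_ord.
rewrite -prodr_const.
apply: ler_prod => p _; rewrite sumr_ge0 /= => [|j _]; last exact: mix_weight_ge0.
exact: sum_mix_weight_le4.
Qed.

End NullModel.

Lemma nstar_le n K (blk : 'I_n -> 'I_K) : (nstar blk <= n * n)%N.
Proof. by rewrite /nstar; elim/big_rec: _ => // p m _; apply: leq_trans (geq_minr _ _). Qed.

Lemma leq_bin2 n : (3 <= n)%N -> (n <= 'C(n, 2))%N.
Proof. by case: n => // n le3n; rewrite binS bin1 -{1}[n]add0n ltn_add2r bin_gt0. Qed.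

Section TailExponent.
Context {R : realType}.

Lemma ln_nstar_ge0_le n K (blk : 'I_n -> 'I_K) : (3 <= n)%N ->
  0 <= (ln (nstar blk)%:R : R) <= 2 * ln ('C(n, 2))%:R.
Proof.
move=> le3n; have C_gt0 : (0 < 'C(n, 2))%N by rewrite bin_gt0; lia.
have L_ge0 : 0 <= ln ('C(n, 2))%:R :> R by rewrite ln_ge0 // ler1n.
have [->|nstar_gt0] := posnP (nstar blk); first by rewrite ln0 // lexx /= mulr_ge0.
rewrite ln_ge0 ?ler1n //= mulr_natl mulr2n -lnM ?posrE ?ltr0n //.
rewrite -natrM ler_ln ?posrE ?ltr0n ?muln_gt0 ?C_gt0 // ler_nat.
by rewrite (leq_trans (nstar_le _ _ blk)) // leq_mul // leq_bin2.
Qed.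

Lemma ln_bin2_ge (c : R) n : 0 < c -> (3 <= n)%N -> expR (3 / c) < n%:R ->
  3 <= c * ln ('C(n, 2))%:R.
Proof.
move=> c_gt0 le3n lt_exp_n; rewrite -ler_pdivrMl // mulrC.
apply: (@le_trans _ _ (ln n%:R)).
  by rewrite -ler_expR lnK ?posrE ?ltr0n ?(ltW lt_exp_n) //; lia.
by rewrite ler_ln ?posrE ?ltr0n ?bin_gt0 ?ler_nat ?leq_bin2 //; lia.
Qed.

Lemma tail_exponent_le (kk P d L Ls D c : R) :
  0 < c -> 1 <= P -> 0 <= kk <= 2 * P -> 16 * c * P <= d -> 3 <= c * L ->
  0 <= Ls <= 2 * L -> 2 <= D ->
  kk * ln 4 - d * L / 4 <= - (2 * P) - c * Ls / D.
Proof.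
move=> c_gt0 P_ge1 /andP[kk_ge0 kk_le] le_d cL_ge3 /andP[Ls_ge0 Ls_le] D_ge2.
have ln4_le3 : ln 4 <= 3 :> R by have := @ln_le_subr1 R 4; lra.
have L_ge0 : 0 <= L by rewrite -(pmulr_rge0 _ c_gt0); lra.
have : kk * ln 4 <= kk * 3 by rewrite ler_wpM2l.
have : c * Ls / D <= c * L.
  by rewrite ler_pdivrMr; nra.
have : 16 * c * P * L <= d * L by rewrite ler_wpM2r.
(* d L / 4 >= 4 P (c L) >= 9 P + c L, while the left side is at most 8 P + c L. *)
nra.
Qed.

End TailExponent.

Theorem theorem2 (R : realType) (K : nat -> nat) (G : nat -> finType)
  (blk : forall n : nat, 'I_n -> 'I_(K n))
  (gam : forall n : nat, 'I_(K n) -> 'I_(K n) -> G n)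
  (B0 : forall n : nat, G n -> R)
  (n0 : nat) (c1 c2 : R) :
  (* blocks are nonempty *)
  (forall (n : nat) (l : 'I_(K n)), exists v : 'I_n, blk n v = l) ->
  (* gamma_B is a set of unordered block pairs; each gamma_B nonempty *)
  (forall (n : nat) (l k : 'I_(K n)), gam n l k = gam n k l) ->
  (forall (n : nat) (c : G n), gamB (gam n) c != finset.set0) ->
  (* null model parameters in (0,1) *)
  (forall (n : nat) (c : G n), 0 < B0 n c < 1) ->
  0 < c1 < 1 / 2 ->
  (forall n : nat, (n0 < n)%N -> forall l k : 'I_(K n),
      ln (nlk (blk n) l k)%:R / (nlk (blk n) l k)%:R < B0 n (gam n l k) /\
      B0 n (gam n l k) < 1 / 2 - c1) ->
  0 < c2 ->
  (forall n : nat, (n0 < n)%N ->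
      c2 <= 1 / 16 * (1 - 2 * (#|G n|)%:R / ((K n ^ 2 + K n)%N)%:R)) ->
  exists C : R, exists N : nat, forall n : nat, (N < n)%N ->
    P0 (blk n) (gam n) (B0 n) (fun g => DeltaBIC R (blk n) (gam n) g < 0)
    >= 1 - C * expR (- ((K n ^ 2 + K n)%N)%:R
                     - c2 * ln (nstar (blk n))%:R / (2 + 2 * Num.sqrt c2 / 3)).
Proof.
move=> _ gam_sym _ B0_01 _ _ c2_gt0 c2_le.
exists 1, (maxn (maxn n0 3) (Num.truncn (expR (3 / c2)))) => n.
rewrite !gtn_max => /andP[/andP[lt_n0n lt_3n] lt_exp_n].
have n_gt0 : (0 < n)%N by lia.
have Kn_gt0 : (0 < K n)%N by case: (blk n (Ordinal n_gt0)) => k; lia.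
have two_P := card_upairs (K n); set P := #|upairs (K n)| in two_P.
apply: le_trans _ (P0_DeltaBIC_lt0_ge _ _ _ (gam_sym n) (B0_01 n)).
have pow4 : 4 ^+ (K n * K n) = expR ((K n * K n)%:R * ln 4) :> R.
  by rewrite expRM_natl lnK // posrE.
rewrite mul1r lerD2l lerN2 pow4 -expRD ler_expR.
rewrite sumr_gamB_sub1 -/P -two_P (natrM R P 2) [_ * 2%:R]mulrC.
apply: tail_exponent_le => //.
- by rewrite ler1n; nia.
- by rewrite ler0n /= -natrM ler_nat; nia.
- have := c2_le n lt_n0n; rewrite -two_P natrM.
  have P_gt0 : 0 < P%:R :> R by rewrite ltr0n; nia.
  rewrite -(ler_pM2r P_gt0).
  have -> : 1 / 16 * (1 - 2 * #|G n|%:R / (P%:R * 2)) * P%:R = (P%:R - #|G n|%:R) / 16 :> R.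
    by field; rewrite gt_eqF.
  lra.
- apply: ln_bin2_ge => //; first exact: ltnW.
  by apply: lt_le_trans (truncnS_gt _) _; rewrite ler_nat.
- exact: ln_nstar_ge0_le (ltnW lt_3n).
- by have := sqrtr_ge0 c2; lra.
Qed.
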